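(* Let $a\geq 3$ and $m\geq 2a^2-a+2$ be integers, and suppose $[C(m,a)]$ is colored with red and blue so that there is no monochromatic solution of $L(m,a)$ in $[C(m,a)]$, with both $a-2$ and $a-1$ red. Then $m-1$, $m-2$, $m-3$ are blue and $a$ is red.
   Context: For integers $m\geq 3$, $a\geq 1$, $L(m,a)$ denotes the equation $x_1+x_2+\cdots+x_{m-1}=a x_m$. For a positive integer $n$, $[n]=\{1,\dots,n\}$. A solution of $L(m,a)$ in $[n]$ is an $m$-tuple $(x_1,\dots,x_m)\in[n]^m$ (entries not necessarily distinct) satisfying the equation; given a 2-coloring of $[n]$, it is monochromatic if all $x_i$ have the same color. $C(m,a)$ denotes $\left\lceil \frac{m-1}{a}\left\lceil \frac{m-1}{a}\right\rceil\right\rceil$. *)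

From mathcomp Require Import all_boot.
Unset Printing Implicit Defensive.

Definition ceil_div (p q : nat) : nat := (p + q - 1) %/ q.

Definition Cma (m a : nat) : nat := ceil_div ((m - 1) * ceil_div (m - 1) a) a.

(* A solution of L(m,a) in [n]: an m-tuple (x_1..x_m) encoded as x : 'I_m -> nat,
   x_i = x (i-1); the last entry x_m is the ordinal m-1. *)
Definition is_solution (m a n : nat) (x : 'I_m -> nat) : Prop :=
  (forall i : 'I_m, 1 <= x i <= n) /\
  exists Hm : m.-1 < m,
    \sum_(i < m | (i : nat) != m.-1) x i = a * x (Ordinal Hm).

(* a 2-colouring of [n] is col : nat -> bool (true = red, false = blue);
   only its values on [n] matter. *)
Definition monochromatic (m : nat) (col : nat -> bool) (x : 'I_m -> nat) : Prop :=
  forall i j : 'I_m, col (x i) = col (x j).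

Definition no_mono_solution (m a n : nat) (col : nat -> bool) : Prop :=
  forall x : 'I_m -> nat, is_solution m a n x -> ~ monochromatic m col x.

(* Every step exhibits a solution whose entries take at most three values:
   x_m = y, and (x_1, ..., x_(m-1)) consists of r copies of y, p copies of u
   and q copies of v, where r + p + q = m - 1 and r y + p u + q v = a y.
   Such a solution forbids y, u, v from all having the same colour
   ([block_solution_not_mono]).  The four instances are
     y = m-1 : 2 copies of m-1, m-2a+1 of a-2, 2a-4 of a-1;
     y = m-2 : 2 copies of m-2, m-a-1 of a-2, a-2 of a-1;
     y = m-3 : 2 copies of m-3, m-3 of a-2;
     y = m-1 : m-1 copies of a,
   the first three showing that m-1, m-2, m-3 are blue, the last that a
   cannot share the colour of m-1 and is therefore red.  The hypothesis on
   m guarantees m - 1 <= C(m,a) ([le_Cma]), so all entries lie in [C(m,a)]. *)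

From mathcomp Require Import all_boot.
From mathcomp Require Import zify.

Definition blocks (r p y u v : nat) (i : nat) : nat :=
  if i < r then y else if i < r + p then u else v.

Lemma sum_blocks (r p q y u v : nat) :
  \sum_(i < r + p + q) blocks r p y u v i = r * y + p * u + q * v.
Proof.
rewrite -(big_mkord xpredT) (big_cat_nat _ (leq_addr q (r + p))) //=.
rewrite (big_cat_nat _ (leq_addr p r)) //=.
have blocks_y i : i < r -> blocks r p y u v i = y by rewrite /blocks => ->.
have blocks_u i : r <= i < r + p -> blocks r p y u v i = u.
  by case/andP=> ri ip; rewrite /blocks ltnNge ri ip.
have blocks_v i : r + p <= i -> blocks r p y u v i = v.
  by move=> pi; rewrite /blocks !ltnNge pi (leq_trans (leq_addr p r) pi).
rewrite (eq_big_nat _ _ (fun i ir => blocks_y i (andP ir).2)).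
rewrite (eq_big_nat _ _ (fun i ip => blocks_u i ip)).
rewrite (eq_big_nat _ _ (fun i iq => blocks_v i (andP iq).1)).
by rewrite !sum_nat_const_nat subn0 !addKn.
Qed.

Lemma sum_but_last (k : nat) (F : nat -> nat) :
  \sum_(i < k.+1 | (i : nat) != k) F i = \sum_(i < k) F i.
Proof.
rewrite big_mkcond big_ord_recr /= eqxx addn0.
by apply: eq_bigr => i _; rewrite (ltn_eqF (ltn_ord i)).
Qed.

Lemma block_solution_not_mono {m a n : nat} {col : nat -> bool}
    {r p q y u v : nat} :
  no_mono_solution m a n col -> col u = col v ->
  r * y + p * u + q * v = a * y -> 0 < m -> r + p + q = m.-1 ->
  0 < y <= n -> 0 < u <= n -> 0 < v <= n -> col y != col u.
Proof.
move=> no_mono col_uv sum_eq m_gt0 size_rpq y_in u_in v_in.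
apply/negP => /eqP col_yu.
pose x (i : 'I_m) := if (i : nat) == m.-1 then y else blocks r p y u v i.
have last_lt : m.-1 < m by rewrite prednK.
apply: (no_mono x); last first.
  suff col_x i : col (x i) = col y by move=> i j; rewrite !col_x.
  by rewrite /x /blocks; repeat case: ifP => _ //; rewrite col_yu.
split.
  by move=> i; rewrite /x /blocks; repeat case: ifP.
exists last_lt; rewrite /x /= eqxx -sum_eq -(sum_blocks r p q y u v) size_rpq.
case: m m_gt0 no_mono x last_lt size_rpq => // k _ _ _ _ _ /=.
rewrite -(sum_but_last k (blocks r p y u v)).
by apply: eq_bigr => i /negbTE ->.
Qed.

Lemma leq_ceil_div (p q k : nat) : 0 < q -> k * q <= p -> k <= ceil_div p q.
Proof. by move=> q_gt0 kq_le; rewrite /ceil_div leq_divRL //; lia. Qed.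

Lemma le_Cma (m a : nat) : 0 < a -> a * a <= m - 1 -> m - 1 <= Cma m a.
Proof.
move=> a_gt0 aa_le; apply: leq_ceil_div => //.
by rewrite leq_mul2l leq_ceil_div ?orbT.
Qed.

Lemma identity_m1 (m a : nat) : 3 <= a -> 2 * a <= m ->
  2 * (m - 1) + (m - 2 * a + 1) * (a - 2) + (2 * a - 4) * (a - 1) = a * (m - 1).
Proof.
move=> a_ge3 m_ge.
have [k ->] : exists k, m = k + 2 * a by exists (m - 2 * a); lia.
have [b ->] : exists b, a = b + 3 by exists (a - 3); lia.
nia.
Qed.

Lemma identity_m2 (m a : nat) : 3 <= a -> 2 * a <= m ->
  2 * (m - 2) + (m - a - 1) * (a - 2) + (a - 2) * (a - 1) = a * (m - 2).
Proof.
move=> a_ge3 m_ge.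
have [k ->] : exists k, m = k + 2 * a by exists (m - 2 * a); lia.
have [b ->] : exists b, a = b + 3 by exists (a - 3); lia.
nia.
Qed.

Lemma identity_m3 (m a : nat) : 3 <= a -> 2 * a <= m ->
  2 * (m - 3) + (m - 3) * (a - 2) + 0 * (a - 1) = a * (m - 3).
Proof.
move=> a_ge3 m_ge.
have [k ->] : exists k, m = k + 2 * a by exists (m - 2 * a); lia.
have [b ->] : exists b, a = b + 3 by exists (a - 3); lia.
nia.
Qed.

Theorem lemma4 (m a : nat) (col : nat -> bool) :
  3 <= a ->
  2 * a ^ 2 - a + 2 <= m ->
  no_mono_solution m a (Cma m a) col ->
  col (a - 2) = true -> col (a - 1) = true ->
  [/\ col (m - 1) = false, col (m - 2) = false, col (m - 3) = false
    & col a = true].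
Proof.
move=> a_ge3 m_ge no_mono red_a2 red_a1.
have aa_le : a * a <= m - 1 by rewrite expnS expn1 in m_ge; nia.
have m_ge2a : 2 * a <= m by nia.
have n_ge : m - 1 <= Cma m a by apply: le_Cma; lia.
have red_a12 : col (a - 2) = col (a - 1) by rewrite red_a2 red_a1.
have blue_by r p q y : r * y + p * (a - 2) + q * (a - 1) = a * y ->
    r + p + q = m - 1 -> 0 < y <= m - 1 -> col y = false.
  move=> sum_eq size_rpq y_in.
  have : col y != col (a - 2).
    by apply: (block_solution_not_mono no_mono red_a12 sum_eq); lia.
  by rewrite red_a2; case: (col y).
have blue_m1 : col (m - 1) = false.
  by apply: (blue_by 2 (m - 2 * a + 1) (2 * a - 4)); [exact: identity_m1 | lia..].
split => //.
- by apply: (blue_by 2 (m - a - 1) (a - 2)); [exact: identity_m2 | lia..].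
- by apply: (blue_by 2 (m - 3) 0); [exact: identity_m3 | lia..].
- have sum_eq : 0 * (m - 1) + (m - 1) * a + 0 * a = a * (m - 1) by lia.
  have : col (m - 1) != col a.
    by apply: (block_solution_not_mono no_mono erefl sum_eq); lia.
  by rewrite blue_m1; case: (col a).
Qed.
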